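(* Let $(X,\sigma_X)$ be a one-sided full shift, $\pi:X\to Y$ a one-block factor map, and $f\in C(X)$ of summable variation. Fix $w\in X$ and define, for $y\in Y$, $n\in\mathbb N$, $$g_n(y,w)=\sum_{b_n=x_1\cdots x_n\in B_n(X),\ \pi(x_1\cdots x_n)=y_1\cdots y_n}e^{f(b_nw)+\cdots+f(\sigma_X^{n-1}(b_nw))},\qquad u_{w,n}(y)=\frac{g_{n+1}(y,w)}{g_n(\sigma_Yy,w)},$$ where $b_nw$ is the concatenation. Let $u:Y\to\mathbb R$ be the continuous function which is the uniform limit of $u_{w,n}$ as $n\to\infty$ (this limit exists and is independent of $w$). Then, with $\bar g_n(y)=\sup_{E_n(y)}\sum_{x\in E_n(y)}e^{f(x)+\cdots+f(\sigma_X^{n-1}x)}$, for all $m\in M(Y,\sigma_Y)$, $$\lim_{n\to\infty}\tfrac1n\int\log\bar g_n\,dm=\int\log u\,dm.$$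
   Context: Full shift: $\{1,\dots,k\}^{\mathbb N}$ with the left shift; $B_n(X)$ words of length $n$. One-block factor map: continuous surjection commuting with shifts, $\pi(x)_i$ depending only on $x_i$ (acting letterwise on words). $f$ is of summable variation if $\sum_{n\ge1}\sup\{|f(x)-f(x')|:x_i=x'_i,1\le i\le n\}<\infty$. $E_n(y)$: any set with exactly one point from each cylinder $[x_1\cdots x_n]$ of $X$ with $\pi([x_1\cdots x_n])\subseteq[y_1\cdots y_n]$; the sup is over all such choices. $M(Y,\sigma_Y)$: invariant Borel probability measures on $Y$. *)

From HB Require Import structures.
From mathcomp Require Import all_boot all_order all_algebra.
From mathcomp Require Import all_classical all_reals all_analysis.
Set Implicit Arguments. Unset Strict Implicit. Unset Printing Implicit Defensive.
Import Order.TTheory GRing.Theory Num.Theory.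
Local Open Scope ring_scope.
Local Open Scope classical_set_scope.

(* Points of a one-sided sequence space over the alphabet 'I_a.+1
   (a finite nonempty alphabet {0,...,a}); coordinates are indexed from 0. *)
Definition seqsp (a : nat) := nat -> 'I_a.+1.
HB.instance Definition _ a := Choice.on (seqsp a).
HB.instance Definition _ a := isPointed.Build (seqsp a) (fun _ => ord0).

Definition word (a n : nat) := {ffun 'I_n -> 'I_a.+1}.

Definition shiftn (T : Type) (i : nat) (x : nat -> T) : nat -> T :=
  fun j => x (i + j)%N.

Definition concat (a n : nat) (b : word a n) (w : seqsp a) : seqsp a :=
  fun j => match (insub j : option 'I_n) with
           | Some i => b i
           | None => w (j - n)%N
           end.

Definition birk (R : realType) (a : nat) (f : seqsp a -> R) (n : nat)
  (x : seqsp a) : R := \sum_(i < n) f (shiftn i x).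

(* continuity of f on the full shift (product of discrete topologies):
   cylinders [x_0 ... x_(N-1)] form a neighbourhood base at x *)
Definition cont_shift (R : realType) (a : nat) (f : seqsp a -> R) : Prop :=
  forall (x : seqsp a) (e : R), 0 < e ->
    exists N : nat, forall x' : seqsp a,
      (forall i, (i < N)%N -> x' i = x i) -> `|f x' - f x| < e.

Definition var_n (R : realType) (a : nat) (f : seqsp a -> R) (n : nat)
  : \bar R :=
  ereal_sup [set e : \bar R | exists x x' : seqsp a,
     (forall i, (i < n)%N -> x i = x' i) /\ e = (`|f x - f x'|)%:E].

Definition summable_variation (R : realType) (a : nat) (f : seqsp a -> R)
  : Prop := (\sum_(1 <= n <oo) var_n f n < +oo)%E.

Definition pimap (k l : nat) (p : 'I_k.+1 -> 'I_l.+1) (x : seqsp k) : seqsp l :=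
  fun i => p (x i).

Definition Yset (k l : nat) (p : 'I_k.+1 -> 'I_l.+1) : set (seqsp l) :=
  [set y | exists x : seqsp k, y = pimap p x].

Definition over (k l n : nat) (p : 'I_k.+1 -> 'I_l.+1) (y : seqsp l)
  (b : word k n) : bool := [forall i : 'I_n, p (b i) == y (val i)].

Definition gfun (R : realType) (k l : nat) (p : 'I_k.+1 -> 'I_l.+1)
  (f : seqsp k -> R) (n : nat) (y : seqsp l) (w : seqsp k) : R :=
  \sum_(b : word k n | over p y b) expR (birk f n (concat b w)).

Definition ufun (R : realType) (k l : nat) (p : 'I_k.+1 -> 'I_l.+1)
  (f : seqsp k -> R) (w : seqsp k) (n : nat) (y : seqsp l) : R :=
  gfun p f n.+1 y w / gfun p f n (shiftn 1 y) w.

(* \bar g_n(y): sup over all choices E_n(y) of one point e b in each cylinder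
   [b] with pi(b) = y_0...y_(n-1), of sum_b exp(S_n f (e b)) *)
Definition gbar (R : realType) (k l : nat) (p : 'I_k.+1 -> 'I_l.+1)
  (f : seqsp k -> R) (n : nat) (y : seqsp l) : R :=
  sup [set s : R | exists e : word k n -> seqsp k,
     (forall b : word k n, over p y b -> forall i : 'I_n, e b (val i) = b i)
     /\ s = \sum_(b : word k n | over p y b) expR (birk f n (e b))].

Definition cylinders (l : nat) : set (set (seqsp l)) :=
  [set A | exists n (c : word l n), A = [set y | forall i : 'I_n, y (val i) = c i]].

(* measurable space: sigma-algebra generated by cylinders (= Borel sets) *)
Definition Yspace (l : nat) := g_sigma_algebraType (@cylinders l).

From Pilot Require Import Defs.
From HB Require Import structures.
From mathcomp Require Import all_boot all_order all_algebra.
From mathcomp Require Import all_classical all_reals all_analysis.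
From mathcomp Require Import measurable_realfun ring lra zify.
Set Implicit Arguments. Unset Strict Implicit. Unset Printing Implicit Defensive.
Import Order.TTheory GRing.Theory Num.Theory.
Local Open Scope ring_scope.
Local Open Scope classical_set_scope.

(* Summable variation gives bounded distortion: Birkhoff sums S_n f of points in
   a common n-cylinder differ by at most V = sum_n var_n f, so gbar_n(y) lies
   between g_n(y,w) and e^V g_n(y,w).  Telescoping,
     ln g_n(y,w) = sum_(i < n) ln u_{w,n-1-i}(sigma^i y),
   and ln u_{w,j} -> ln u uniformly with |ln u_{w,j}| <= ln(k+1) + sup|f| for
   all j, so ln gbar_n(y) = sum_(i < n) ln u(sigma^i y) + o(n) uniformly on Y.
   Integrating against the shift-invariant m, each term contributes the same
   integral of ln u. *)

Definition agree (a n : nat) (x y : seqsp a) := forall i, (i < n)%N -> x i = y i.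

Lemma agree_shiftn a n i (x y : seqsp a) :
  agree n x y -> agree (n - i) (shiftn i x) (shiftn i y).
Proof. by move=> xy t lt_t; rewrite /shiftn xy // -ltn_subRL. Qed.

Lemma shiftn0 T (y : nat -> T) : shiftn 0 y = y.
Proof. by apply/funext => j; rewrite /shiftn add0n. Qed.

Lemma shiftnS T i (y : nat -> T) : shiftn i.+1 y = shiftn i (shiftn 1 y).
Proof. by apply/funext => j; rewrite /shiftn add1n addSn. Qed.

Lemma shiftnSr T i (y : nat -> T) : shiftn i.+1 y = shiftn 1 (shiftn i y).
Proof. by apply/funext => j; rewrite /shiftn addnA addn1. Qed.

Lemma Yset_shiftn k l (p : 'I_k.+1 -> 'I_l.+1) i y : Yset p y -> Yset p (shiftn i y).
Proof. by move=> [x ->]; exists (shiftn i x). Qed.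

Lemma concat_lt a n (b : word a n) w j (lt_jn : (j < n)%N) :
  concat b w j = b (Ordinal lt_jn).
Proof.
rewrite /concat; case: insubP => [i _ /= ij|]; last by rewrite lt_jn.
by congr (b _); apply: val_inj.
Qed.

Lemma concat_ord a n (b : word a n) w (i : 'I_n) : concat b w i = b i.
Proof. by rewrite (concat_lt _ _ (ltn_ord i)); congr (b _); apply: val_inj. Qed.

Lemma concat_ge a n (b : word a n) w j : (n <= j)%N -> concat b w j = w (j - n)%N.
Proof. by move=> le_nj; rewrite /concat insubN // -leqNgt. Qed.

Lemma concat_agree a n (b : word a n) w x :
  (forall i : 'I_n, x (val i) = b i) -> agree n (concat b w) x.
Proof. by move=> xb j lt_jn; rewrite concat_lt -(xb (Ordinal lt_jn)). Qed.

Definition scons a (x0 : 'I_a.+1) (x : seqsp a) : seqsp a :=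
  fun t => if t is t'.+1 then x t' else x0.

Definition wcons a n (x0 : 'I_a.+1) (b : word a n) : word a n.+1 :=
  [ffun i => if unlift ord0 i is Some j then b j else x0].

Definition wtail a n (b : word a n.+1) : word a n := [ffun j => b (lift ord0 j)].

Lemma wconsK a n (x0 : 'I_a.+1) : cancel (@wcons a n x0) (@wtail a n).
Proof. by move=> b; apply/ffunP => j; rewrite !ffunE liftK. Qed.

Lemma wcons_eta a n (b : word a n.+1) : wcons (b ord0) (wtail b) = b.
Proof.
apply/ffunP => i; rewrite ffunE.
by case: unliftP => [j ->|->]; rewrite ?ffunE.
Qed.

Lemma concat_wcons a n x0 (b : word a n) w :
  concat (wcons x0 b) w = scons x0 (concat b w).
Proof.
apply/funext => -[|t].
  rewrite (concat_lt _ _ (ltn0Sn n)) ffunE.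
  by rewrite (_ : Ordinal _ = ord0) ?unlift_none //; apply: val_inj.
case: (ltnP t n) => [lt_tn|le_nt] /=; last by rewrite !concat_ge // subSS.
rewrite (concat_lt _ _ (lt_tn : (t.+1 < n.+1)%N)) (concat_lt _ _ lt_tn) ffunE.
by rewrite (_ : Ordinal _ = lift ord0 (Ordinal lt_tn)) ?liftK //; apply: val_inj.
Qed.

Lemma over_wcons k l (p : 'I_k.+1 -> 'I_l.+1) n (y : seqsp l) x0 (b : word k n) :
  Defs.over p y (wcons x0 b) = (p x0 == y 0%N) && Defs.over p (shiftn 1 y) b.
Proof.
apply/forallP/andP => [yb|[/eqP y0 /forallP yb] i].
  split; first by have := yb ord0; rewrite ffunE unlift_none.
  apply/forallP => j; have := yb (lift ord0 j); rewrite ffunE liftK.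
  by rewrite /shiftn add1n.
rewrite ffunE; case: unliftP => [j ->|->]; last by rewrite y0.
by have := yb j; rewrite /shiftn add1n.
Qed.

Lemma over_agree k l (p : 'I_k.+1 -> 'I_l.+1) n (y y' : seqsp l) :
  agree n y y' -> Defs.over p y =1 Defs.over p y' :> (word k n -> bool).
Proof. by move=> yy' b; apply: eq_forallb => i; rewrite (yy' _ (ltn_ord i)). Qed.

Lemma agree_closed_measurable l n (S : set (Yspace l)) :
  (forall y y', agree n y y' -> S y -> S y') -> measurable S.
Proof.
move=> Sn.
have -> : S = \big[setU/set0]_(c : word l n | `[< S (concat c point) >])
     [set y : Yspace l | forall i : 'I_n, y (val i) = c i].
  apply/seteqP; split => y.
  - move=> Sy; rewrite -bigcup_seq_cond /=.
    exists [ffun i : 'I_n => y (val i)]; last by move=> i /=; rewrite ffunE.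
    rewrite /= mem_index_enum /=; apply/asboolP; apply: Sn Sy => i lt_in.
    by rewrite concat_lt ffunE.
  - rewrite -bigcup_seq_cond => -[c /andP[_ /asboolP Sc]] /= yc.
    by apply: Sn Sc; exact: concat_agree.
apply: bigsetU_measurable => c _; apply: sub_sigma_algebra.
by exists n, c.
Qed.

Lemma measurable_fun_agree l n (R : realType) (D : set (Yspace l)) (h : Yspace l -> R) :
  measurable D -> (forall y y', agree n y y' -> h y = h y') -> measurable_fun D h.
Proof.
move=> mD hn _ B mB; apply: measurableI => //.
by apply: (@agree_closed_measurable l n) => y y' yy' /=; rewrite (hn _ _ yy').
Qed.

Lemma measurable_Yset k l (p : 'I_k.+1 -> 'I_l.+1) : measurable (Yset p : set (Yspace l)).
Proof.
have -> : (Yset p : set (Yspace l)) = \bigcap_i [set y : Yspace l | exists a, y i = p a].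
  apply/seteqP; split => [y [x ->] i _|y Yy]; first by exists (x i).
  exists (fun i => odflt ord0 [pick a | p a == y i]).
  apply/funext => i; rewrite /pimap; case: pickP => [a /eqP -> //|none].
  by have [a ya] := Yy i I; move: (none a); rewrite ya eqxx.
apply: bigcapT_measurable => i; apply: (@agree_closed_measurable l i.+1).
by move=> y y' yy' [b yb]; exists b; rewrite -yy'.
Qed.

Lemma measurable_shiftn l i : measurable_fun setT (shiftn i : Yspace l -> Yspace l).
Proof.
apply: (@measurability _ _ (Yspace l) (Yspace l) setT (shiftn i) (@cylinders l)) => //.
move=> _ [A [n [c ->]] <-]; apply: (@agree_closed_measurable l (i + n)).
move=> y y' yy' /= [_ yc]; split => // j; rewrite /shiftn -yy' ?ltn_add2l //.
exact: yc.
Qed.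

Lemma birk1 (R : realType) a (f : seqsp a -> R) x : birk f 1 x = f x.
Proof. by rewrite /birk big_ord1 shiftn0. Qed.

Lemma birk_scons (R : realType) a (f : seqsp a -> R) n x0 x :
  birk f n.+1 (scons x0 x) = f (scons x0 x) + birk f n x.
Proof. by rewrite /birk big_ord_recl shiftn0; congr (_ + _). Qed.

Definition var_sum (R : realType) a (f : seqsp a -> R) : R :=
  fine (\sum_(1 <= n <oo) var_n f n)%E.

(* Bounds sup |f|: f x is within var_1 f <= var_sum f of f at the constant
   sequence x_0 x_0 ... *)
Definition sup_bound (R : realType) a (f : seqsp a -> R) : R :=
  \sum_(c : 'I_a.+1) `|f (fun=> c)| + var_sum f.

Section SummableVariation.
Variables (R : realType) (a : nat) (f : seqsp a -> R).
Hypothesis f_sv : summable_variation f.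

Lemma var_n_ge n (x x' : seqsp a) : agree n x x' -> (`|f x - f x'|%:E <= var_n f n)%E.
Proof. by move=> xx'; apply: ereal_sup_ubound; exists x, x'. Qed.

Lemma var_n_ge0 n : (0 <= var_n f n)%E.
Proof.
by apply: le_trans (var_n_ge (x := point) (x' := point) _) => //; rewrite subrr normr0.
Qed.

Lemma var_sumE : (\sum_(1 <= n <oo) var_n f n)%E = (var_sum f)%:E.
Proof.
rewrite /var_sum fineK // ge0_fin_numE //.
by apply: nneseries_ge0 => n _ _; exact: var_n_ge0.
Qed.

Lemma var_sum_ge0 : 0 <= var_sum f.
Proof. by rewrite -lee_fin -var_sumE; apply: nneseries_ge0 => n _ _; exact: var_n_ge0. Qed.

(* sigma^i x and sigma^i x' still agree on n - i coordinates. *)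
Lemma birk_distortion n (x x' : seqsp a) : agree n x x' ->
  `|birk f n x - birk f n x'| <= var_sum f.
Proof.
move=> xx'; rewrite /birk -sumrB; apply: le_trans (ler_norm_sum _ _ _) _.
rewrite -lee_fin -var_sumE -sumEFin.
apply: (@le_trans _ _ (\sum_(i < n) var_n f (n - i))%E).
  by apply: lee_sum => i _; apply: var_n_ge; exact: agree_shiftn.
rewrite -(big_mkord xpredT (fun i => var_n f (n - i))) big_nat_rev /=.
rewrite (@eq_big_nat _ _ _ 0 n _ (fun i => var_n f i.+1)); last first.
  by move=> i /andP[_ lt_in]; rewrite add0n subnBA // addnC addnK.
rewrite (_ : \sum_(0 <= i < n) _ = \sum_(1 <= i < n.+1) var_n f i)%E; last by rewrite big_add1.
by apply: nneseries_lim_ge => j _ _; exact: var_n_ge0.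
Qed.

Lemma norm_le_sup_bound x : `|f x| <= sup_bound f.
Proof.
have -> : f x = f (fun=> x 0%N) + (f x - f (fun=> x 0%N)) by rewrite addrC subrK.
apply: le_trans (ler_normD _ _) _; apply: lerD.
  by rewrite (bigD1 (x 0%N)) //= lerDl; apply: sumr_ge0.
by rewrite -(birk1 f x) -(birk1 f (fun=> _)); apply: birk_distortion => -[].
Qed.

End SummableVariation.

Lemma normr_ln_le (R : realType) (c x : R) :
  expR (- c) <= x <= expR c -> `|ln x| <= c.
Proof.
move=> /andP[lo hi]; have x_gt0 : 0 < x by apply: lt_le_trans lo; exact: expR_gt0.
by rewrite ler_norml; apply/andP; split; rewrite -ler_expR lnK ?posrE.
Qed.

Lemma ln_lipschitz (R : realType) (d x y : R) : 0 < d -> d <= x -> d <= y ->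
  `|ln x - ln y| <= `|x - y| / d.
Proof.
move=> d_gt0 dx dy.
suff one_side s t : d <= s -> d <= t -> ln s - ln t <= `|s - t| / d.
  rewrite ler_norml; apply/andP; split; last exact: one_side.
  by rewrite lerNl opprB distrC; exact: one_side.
move=> ds dt; have s_gt0 : 0 < s by apply: lt_le_trans ds.
have t_gt0 : 0 < t by apply: lt_le_trans dt.
rewrite -lnV ?posrE // -lnM ?posrE ?invr_gt0 //.
apply: (@le_trans _ _ (s / t - 1)).
  have := @le_ln1Dx R (s / t - 1); rewrite addrCA subrr addr0; apply.
  by rewrite ltrBrDl subrr divr_gt0.
rewrite (_ : s / t - 1 = (s - t) / t); last by rewrite mulrBl divff // gt_eqF.
apply: (@le_trans _ _ (`|s - t| / t)).
  by apply: ler_wpM2r; [rewrite invr_ge0 ltW|exact: ler_norm].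
by apply: ler_wpM2l => //; rewrite lef_pV2 ?posrE.
Qed.

Lemma normr_sum_mostly_small (R : realDomainType) (n N : nat) (K e : R) (D : nat -> R) :
  0 <= K -> 0 <= e ->
  (forall i, (i < n)%N -> `|D i| <= K) -> (forall i, (i < n - N)%N -> `|D i| <= e) ->
  `|\sum_(0 <= i < n) D i| <= N%:R * K + n%:R * e.
Proof.
move=> K_ge0 e_ge0 DK De; rewrite (@big_cat_nat _ _ _ (n - N) 0 n) ?leq_subr //=.
apply: le_trans (ler_normD _ _) _; rewrite addrC.
apply: lerD; apply: le_trans (ler_norm_sum _ _ _) _.
  apply: (@le_trans _ _ (\sum_(n - N <= i < n) K)).
    by apply: ler_sum_nat => i /andP[_ lt_in]; exact: DK.
  by rewrite sumr_const_nat mulr_natl; apply: ler_wpMn2l => //; lia.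
apply: (@le_trans _ _ (\sum_(0 <= i < n - N) e)).
  by apply: ler_sum_nat => i /andP[_]; exact: De.
by rewrite sumr_const_nat mulr_natl; apply: ler_wpMn2l => //; lia.
Qed.

Lemma gfun0 (R : realType) k l (p : 'I_k.+1 -> 'I_l.+1) (f : seqsp k -> R) y w :
  gfun p f 0 y w = 1.
Proof.
rewrite /gfun (eq_bigl xpredT) => [|b]; last by apply/forallP => -[].
under eq_bigr do rewrite /birk big_ord0 expR0.
by rewrite sumr_const card_ffun !card_ord expn0.
Qed.

Lemma gfunS (R : realType) k l (p : 'I_k.+1 -> 'I_l.+1) (f : seqsp k -> R) n y w :
  gfun p f n.+1 y w =
  \sum_(c | p c == y 0%N) \sum_(b : word k n | Defs.over p (shiftn 1 y) b)
     expR (f (scons c (concat b w))) * expR (birk f n (concat b w)).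
Proof.
rewrite /gfun (reindex (fun cb : 'I_k.+1 * word k n => wcons cb.1 cb.2)) /=.
  rewrite pair_big; apply: eq_big => [[c b]|[c b] _] /=; first by rewrite over_wcons.
  by rewrite concat_wcons birk_scons expRD.
exists (fun b : word k n.+1 => (b ord0, wtail b)) => [[c b] _|b _]; last exact: wcons_eta.
by rewrite wconsK ffunE unlift_none.
Qed.

Section Locality.
Variables (R : realType) (k l : nat) (p : 'I_k.+1 -> 'I_l.+1) (f : seqsp k -> R).

Lemma gfun_agree n w (y y' : seqsp l) : agree n y y' -> gfun p f n y w = gfun p f n y' w.
Proof. by move=> yy'; apply: eq_bigl; exact: over_agree. Qed.

Lemma gbar_agree n (y y' : seqsp l) : agree n y y' -> gbar p f n y = gbar p f n y'.
Proof.
by move=> yy'; rewrite /gbar (_ : Defs.over p y = Defs.over p y') //; apply/funext/over_agree.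
Qed.

Lemma ufun_agree w n (y y' : seqsp l) : agree n.+1 y y' -> ufun p f w n y = ufun p f w n y'.
Proof.
move=> yy'; rewrite /ufun (gfun_agree _ yy') (@gfun_agree n _ (shiftn 1 y) (shiftn 1 y')) //.
by move=> i lt_in; rewrite /shiftn yy'.
Qed.

End Locality.

(* By [gfunS], g_(n+1)(y) is g_n(sigma y) weighted by exp f over the at most
   k+1 admissible first letters. *)
Definition ratio_bound (R : realType) k (f : seqsp k -> R) : R :=
  sup_bound f + ln k.+1%:R.

Section Gfun.
Variables (R : realType) (k l : nat) (p : 'I_k.+1 -> 'I_l.+1) (f : seqsp k -> R) (w : seqsp k).
Hypothesis f_sv : summable_variation f.

Local Notation g n y := (gfun p f n y w).
Local Notation C := (ratio_bound f).

Lemma ratio_bound_ge0 : 0 <= C.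
Proof.
apply: addr_ge0; last by rewrite ln_ge0 // ler1n.
by apply: addr_ge0; [apply: sumr_ge0 | exact: var_sum_ge0].
Qed.

Lemma gfun_ge0 n y : 0 <= g n y.
Proof. by apply: sumr_ge0 => b _; exact: expR_ge0. Qed.

Lemma gfunS_bounds n y : Yset p y ->
  expR (- sup_bound f) * g n (shiftn 1 y) <= g n.+1 y <=
  k.+1%:R * expR (sup_bound f) * g n (shiftn 1 y).
Proof.
move=> [x y_px]; have py0 : p (x 0%N) == y 0%N by rewrite y_px.
have g_ge0 := gfun_ge0 n (shiftn 1 y).
rewrite gfunS; apply/andP; split.
  rewrite (bigD1 (x 0%N) py0) /= -[X in X <= _]addr0; apply: lerD; last first.
    by apply: sumr_ge0 => c _; apply: sumr_ge0 => b _; rewrite mulr_ge0 ?expR_ge0.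
  rewrite mulr_sumr; apply: ler_sum => b _; rewrite ler_wpM2r ?expR_ge0 // ler_expR.
  by rewrite lerNl; apply: le_trans (ler_norm _) _; rewrite normrN norm_le_sup_bound.
apply: (@le_trans _ _ (\sum_(c | p c == y 0%N) expR (sup_bound f) * g n (shiftn 1 y))).
  apply: ler_sum => c _; rewrite mulr_sumr; apply: ler_sum => b _.
  rewrite ler_wpM2r ?expR_ge0 // ler_expR.
  by apply: le_trans (ler_norm _) _; rewrite norm_le_sup_bound.
rewrite sumr_const -mulrA mulr_natl; apply: ler_wpMn2l; first by rewrite mulr_ge0 ?expR_ge0.
by apply: leq_trans (max_card _) _; rewrite card_ord.
Qed.

Lemma gfun_gt0 n y : Yset p y -> 0 < g n y.
Proof.
elim: n y => [|n IHn] y Yy; first by rewrite gfun0.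
have /andP[+ _] := gfunS_bounds n Yy; apply: lt_le_trans.
by rewrite mulr_gt0 ?expR_gt0 //; apply/IHn/Yset_shiftn.
Qed.

Lemma ufun_bounds n y : Yset p y -> expR (- C) <= ufun p f w n y <= expR C.
Proof.
move=> Yy; have gS_gt0 := gfun_gt0 n (Yset_shiftn 1 Yy).
have ln_ge0 : 0 <= ln (k.+1%:R : R) by rewrite ln_ge0 // ler1n.
have /andP[lo hi] := gfunS_bounds n Yy.
rewrite /ufun ler_pdivlMr // ler_pdivrMr //; apply/andP; split.
  apply: le_trans lo; apply: ler_wpM2r; first exact: ltW.
  by rewrite ler_expR lerN2 lerDl.
apply: le_trans hi _; apply: ler_wpM2r; first exact: ltW.
by rewrite /ratio_bound [expR (_ + ln _)]expRD lnK ?posrE ?ltr0n // mulrC.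
Qed.

Lemma ln_ufun n y : Yset p y ->
  ln (ufun p f w n y) = ln (g n.+1 y) - ln (g n (shiftn 1 y)).
Proof.
move=> Yy; have gS_gt0 := gfun_gt0 n (Yset_shiftn 1 Yy).
by rewrite /ufun lnM ?posrE ?invr_gt0 ?(gfun_gt0 n.+1 Yy) // lnV.
Qed.

Lemma ln_gfun_telescope n y : Yset p y ->
  ln (g n y) = \sum_(i < n) ln (ufun p f w (n - i.+1) (shiftn i y)).
Proof.
move=> Yy; pose L i := ln (g (n - i) (shiftn i y)).
have step (i : 'I_n) : ln (ufun p f w (n - i.+1) (shiftn i y)) = L i - L i.+1.
  by rewrite ln_ufun; [rewrite /L (subnSK (ltn_ord i)) -shiftnSr | exact: Yset_shiftn].
rewrite (eq_bigr _ (fun i _ => step i)) -(big_mkord xpredT (fun i => L i - L i.+1)).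
rewrite (@telescope_sumr_eq _ 0 n (fun i => - L i)) // => [|j _]; last by rewrite opprK addrC.
by rewrite /L subnn gfun0 ln1 subn0 shiftn0 oppr0 opprK add0r.
Qed.

Lemma gbar_bounds n y : Yset p y ->
  g n y <= gbar p f n y <= expR (var_sum f) * g n y.
Proof.
move=> Yy; rewrite /gbar; set S := [set s : R | _].
have Sg : S (g n y).
  by exists (fun b => concat b w); split => // b _ i; rewrite concat_ord.
have S_ub s : S s -> s <= expR (var_sum f) * g n y.
  move=> [e [eb ->]]; rewrite mulr_sumr; apply: ler_sum => b yb.
  rewrite -expRD ler_expR -lerBlDr; apply: le_trans (ler_norm _) _.
  by rewrite distrC birk_distortion //; apply: concat_agree => i; rewrite eb.
apply/andP; split; first by apply: ub_le_sup => //; exists (expR (var_sum f) * g n y).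
by apply: ge_sup => //; exists (g n y).
Qed.

Lemma ln_gbar_gfun n y : Yset p y -> `|ln (gbar p f n y) - ln (g n y)| <= var_sum f.
Proof.
move=> Yy; have /andP[lo hi] := gbar_bounds n Yy; have g_gt0 := gfun_gt0 n Yy.
have gbar_gt0 : 0 < gbar p f n y by apply: lt_le_trans lo.
rewrite ger0_norm ?subr_ge0 ?ler_ln ?posrE //.
rewrite lerBlDr -[X in _ <= X + _]expRK -lnM ?posrE ?expR_gt0 //.
by rewrite ler_ln ?posrE ?mulr_gt0 ?expR_gt0.
Qed.

Lemma normr_ln_gbar_le n y : Yset p y -> `|ln (gbar p f n y)| <= var_sum f + n%:R * C.
Proof.
move=> Yy; rewrite -(subrK (ln (g n y)) (ln (gbar p f n y))).
apply: le_trans (ler_normD _ _) _; apply: lerD; first exact: ln_gbar_gfun.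
rewrite ln_gfun_telescope //; apply: le_trans (ler_norm_sum _ _ _) _.
apply: (@le_trans _ _ (\sum_(i < n) C)); last by rewrite sumr_const card_ord mulr_natl.
apply: ler_sum => i _; apply: normr_ln_le; apply: ufun_bounds; exact: Yset_shiftn.
Qed.

End Gfun.

Section UniformLimit.
Variables (R : realType) (k l : nat) (p : 'I_k.+1 -> 'I_l.+1)
  (f : seqsp k -> R) (w : seqsp k) (u : seqsp l -> R).
Hypothesis f_sv : summable_variation f.
Hypothesis ufun_cvg : forall e : R, 0 < e -> exists N : nat, forall n : nat, (N <= n)%N ->
  forall y : seqsp l, Yset p y -> `|ufun p f w n y - u y| < e.

Local Notation C := (ratio_bound f).

Lemma u_bounds y : Yset p y -> expR (- C) <= u y <= expR C.
Proof.
move=> Yy; apply/andP; split; apply/ler_addgt0Pr => e e_gt0;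
  have [N uN] := ufun_cvg e_gt0; have := uN N (leqnn N) y Yy;
  have /andP[lo hi] := ufun_bounds w f_sv N Yy; rewrite ltr_norml => /andP[]; lra.
Qed.

Lemma ln_ufun_cvg e : 0 < e -> exists N, forall n, (N <= n)%N -> forall y, Yset p y ->
  `|ln (ufun p f w n y) - ln (u y)| <= e.
Proof.
move=> e_gt0; have d_gt0 : 0 < expR (- C) by exact: expR_gt0.
have [N uN] := ufun_cvg (mulr_gt0 e_gt0 d_gt0); exists N => n le_Nn y Yy.
have /andP[lo _] := ufun_bounds w f_sv n Yy; have /andP[ulo _] := u_bounds Yy.
apply: le_trans (ln_lipschitz d_gt0 lo ulo) _.
by rewrite ler_pdivrMr // ltW // uN.
Qed.

Lemma ln_ufun_sub_bound n y : Yset p y -> `|ln (ufun p f w n y) - ln (u y)| <= 2 * C.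
Proof.
move=> Yy; apply: le_trans (ler_normB _ _) _; rewrite mulr2n mulrDl mul1r.
by apply: lerD; apply: normr_ln_le; [exact: ufun_bounds | exact: u_bounds].
Qed.

Lemma measurable_fun_ln_u : measurable_fun (Yset p : set (Yspace l)) (fun y => ln (u y)).
Proof.
apply: (@measurable_fun_cvg _ (Yspace l) R _ (fun n y => ln (ufun p f w n y))).
  move=> n; apply: (@measurable_fun_agree _ n.+1); first exact: measurable_Yset.
  by move=> y y' yy'; rewrite (ufun_agree _ _ _ yy').
move=> y Yy; apply/cvgrPdist_le => e e_gt0.
have [N lnN] := ln_ufun_cvg e_gt0.
by exists N => // n /= le_Nn; rewrite distrC; exact: lnN.
Qed.

(* After telescoping, the errors ln u_{w,j} - ln u are at most e for j >= N and
   at most 2C for the N remaining indices; var_sum f comes from [ln_gbar_gfun]. *)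
Lemma ln_gbar_birkhoff e : 0 < e -> exists N : nat, forall n y, Yset p y ->
  `|ln (gbar p f n y) - \sum_(i < n) ln (u (shiftn i y))| <=
  var_sum f + N%:R * (2 * C) + n%:R * e.
Proof.
move=> e_gt0; have [N lnN] := ln_ufun_cvg e_gt0; exists N => n y Yy.
rewrite -(subrK (ln (gfun p f n y w)) (ln (gbar p f n y))) -addrA.
apply: le_trans (ler_normD _ _) _; rewrite -addrA; apply: lerD; first exact: ln_gbar_gfun.
rewrite (ln_gfun_telescope w f_sv n Yy) -sumrB -(big_mkord xpredT
  (fun i => ln (ufun p f w (n - i.+1) (shiftn i y)) - ln (u (shiftn i y)))).
apply: normr_sum_mostly_small => [||i _|i lt_i].
- by rewrite mulr_ge0 // ratio_bound_ge0.
- exact: ltW.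
- exact/ln_ufun_sub_bound/Yset_shiftn.
- by apply: lnN; [lia | exact: Yset_shiftn].
Qed.

End UniformLimit.

Lemma integrable_bounded d (T : measurableType d) (R : realType)
    (mu : {finite_measure set T -> \bar R}) (D : set T) (h : T -> R) (M : R) :
  measurable D -> measurable_fun D h -> (forall x, D x -> `|h x| <= M) ->
  mu.-integrable D (EFin \o h).
Proof.
move=> mD mh hM; apply: (@le_integrable _ _ _ _ _ mD _ (EFin \o cst M)).
- exact/measurable_EFinP.
- by move=> x Dx /=; rewrite lee_fin (le_trans (hM x Dx)) ?ler_norm.
- exact: finite_measure_integrable_cst.
Qed.

Lemma integral_full_measure d (T : measurableType d) (R : realType)
    (P : probability T R) (Y : set T) (h : T -> R) (M : R) :
  measurable Y -> P Y = 1%E -> measurable_fun setT h -> (forall x, `|h x| <= M) ->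
  (\int[P]_(x in Y) (h x)%:E = \int[P]_x (h x)%:E)%E.
Proof.
move=> mY PY1 mh hM.
have PYC0 : P (~` Y) = 0%E by rewrite probability_setC // PY1 -EFinB subrr.
rewrite (@negligible_integral _ _ _ P setT (~` Y)) ?setTD ?setCK //.
- exact: measurableC.
- exact: (@integrable_bounded _ _ _ _ _ _ M).
Qed.

Lemma abse_integralB_le d (T : measurableType d) (R : realType) (P : probability T R)
    (Y : set T) (h1 h2 : T -> R) (D : R) :
  measurable Y -> P Y = 1%E ->
  P.-integrable Y (EFin \o h1) -> P.-integrable Y (EFin \o h2) ->
  (forall y, Y y -> `|h1 y - h2 y| <= D) ->
  (`|\int[P]_(y in Y) (h1 y)%:E - \int[P]_(y in Y) (h2 y)%:E| <= D%:E)%E.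
Proof.
move=> mY PY1 int1 int2 h12D.
have mh12 : measurable_fun Y (fun y => (h1 y - h2 y)%:E).
  apply/measurable_EFinP; apply: measurable_funB; apply/measurable_EFinP.
    exact: measurable_int int1.
  exact: measurable_int int2.
rewrite -integralB // (eq_integral (fun y => (h1 y - h2 y)%:E)) //.
apply: le_trans (le_abse_integral _ mY mh12) _.
apply: (@le_trans _ _ (\int[P]_(y in Y) (cst D%:E) y)%E).
  by apply: ge0_le_integral => //; apply: measurableT_comp.
rewrite (integral_cst P mY) le_eqVlt; apply/orP; left; apply/eqP.
by rewrite -[RHS]mule1; congr (_ * _)%E.
Qed.

Section ShiftInvariance.
Variables (R : realType) (l : nat) (m : probability (Yspace l) R).
Hypothesis m_inv : forall A : set (Yspace l), measurable A -> m (shiftn 1 @^-1` A) = m A.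

Lemma measure_preimage_shiftn i (A : set (Yspace l)) :
  measurable A -> m (shiftn i @^-1` A) = m A.
Proof.
elim: i A => [|i IHi] A mA.
  by rewrite (_ : shiftn 0 @^-1` A = A) //; apply/funext => y; rewrite /preimage shiftn0.
rewrite (_ : shiftn i.+1 @^-1` A = shiftn 1 @^-1` (shiftn i @^-1` A)); last first.
  by apply/funext => y; rewrite /preimage /= shiftnS.
by rewrite m_inv ?IHi // -[X in measurable X]setTI; exact: measurable_shiftn.
Qed.

Lemma integral_shiftn i (h : Yspace l -> R) (M : R) :
  measurable_fun setT h -> (forall y, `|h y| <= M) ->
  (\int[m]_y (h (shiftn i y))%:E = \int[m]_y (h y)%:E)%E.
Proof.
move=> mh hM.
have := @integral_pushforward _ _ _ _ _ _ (@measurable_shiftn l i) m setT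
  (EFin \o h) _ _ measurableT.
rewrite preimage_setT => <-.
- apply: (@eq_measure_integral _ _ _ setT m); first exact: measurable_shiftn.
  by move=> mshift A mA _; exact: measure_preimage_shiftn.
- exact/measurable_EFinP.
- rewrite -compA; apply: (@integrable_bounded _ _ _ _ _ _ M) => // [|y _]; last exact: hM.
  by apply: measurableT_comp => //; exact: measurable_shiftn.
Qed.

End ShiftInvariance.

Import numFieldNormedType.Exports.

Lemma cvg_scaled_of_sublinear_deviation (R : realType) (a : nat -> R) (J : R) :
  (forall e, 0 < e -> exists c, forall n, `|a n - n%:R * J| <= c + n%:R * e) ->
  (fun n : nat => n%:R^-1 * a n) @ \oo --> J.
Proof.
move=> dev; apply/cvgrPdist_le => eps eps_gt0.
have e_gt0 : 0 < eps / 2 by rewrite divr_gt0.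
have [c dev_c] := dev _ e_gt0.
have c_ge0 : 0 <= c by have := dev_c 0%N; rewrite !mul0r addr0; exact: le_trans.
exists (Num.bound (c / (eps / 2))).+1 => // n /= le_bn.
have n_gt0 : (0 : R) < n%:R by rewrite ltr0n (leq_trans _ le_bn).
have c_lt : c < eps / 2 * n%:R.
  rewrite mulrC -ltr_pdivrMr ?divr_gt0 //; apply: lt_le_trans (archi_boundP _) _.
    by rewrite divr_ge0 // ltW.
  by rewrite ler_nat ltnW.
rewrite (_ : J - _ = (n%:R * J - a n) / n%:R); last by field; rewrite gt_eqF.
rewrite normrM normfV (gtr0_norm n_gt0) ler_pdivrMr // distrC.
by apply: le_trans (dev_c n) _; lra.
Qed.

Section Proposition.
Variables (R : realType) (k l : nat) (p : 'I_k.+1 -> 'I_l.+1)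
  (f : seqsp k -> R) (w : seqsp k) (u : seqsp l -> R) (m : probability (Yspace l) R).
Hypothesis f_sv : summable_variation f.
Hypothesis ufun_cvg : forall e : R, 0 < e -> exists N : nat, forall n : nat, (N <= n)%N ->
  forall y : seqsp l, Yset p y -> `|ufun p f w n y - u y| < e.
Hypothesis mY1 : m (Yset p : set (Yspace l)) = 1%E.
Hypothesis m_inv : forall A : set (Yspace l), measurable A -> m (shiftn 1 @^-1` A) = m A.

Let Y : set (Yspace l) := Yset p.
Let mY : measurable Y := measurable_Yset p.
Local Notation C := (ratio_bound f).

(* Extended by 0 off Y, so that it can be composed with the shift on the whole space. *)
Let lnu : Yspace l -> R := (fun y => ln (u y)) \_ Y.

Let measurable_lnu : measurable_fun setT lnu.
Proof.
apply/(measurable_restrict _ mY measurableT); rewrite setTI.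
exact: measurable_fun_ln_u f_sv ufun_cvg.
Qed.

Let normr_lnu_le y : `|lnu y| <= C.
Proof.
rewrite /lnu /patch; case: ifPn => [/set_mem Yy|_].
  exact: normr_ln_le (u_bounds f_sv ufun_cvg Yy).
by rewrite normr0 ratio_bound_ge0.
Qed.

Let lnuE y : Y y -> lnu y = ln (u y).
Proof. by move=> Yy; rewrite /lnu patchT //; exact/mem_set. Qed.

Lemma fin_num_integral_ln_u : (\int[m]_(y in Y) (ln (u y))%:E)%E \is a fin_num.
Proof.
have : m.-integrable Y (EFin \o (fun y => ln (u y))).
  apply: (@integrable_bounded _ _ _ _ _ _ C mY (measurable_fun_ln_u f_sv ufun_cvg)).
  by move=> y Yy; rewrite -lnuE.
exact: integrable_fin_num.
Qed.

Let J : R := fine (\int[m]_(y in Y) (ln (u y))%:E)%E.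

Let integral_lnu_shiftn i : (\int[m]_(y in Y) (lnu (shiftn i y))%:E)%E = J%:E.
Proof.
have mlnu_i : measurable_fun setT (lnu \o (shiftn i : Yspace l -> Yspace l)).
  by apply: measurableT_comp => //; exact: measurable_shiftn.
rewrite (integral_full_measure mY mY1 mlnu_i (fun y => normr_lnu_le (shiftn i y))).
rewrite (integral_shiftn m_inv i measurable_lnu normr_lnu_le).
rewrite -(integral_full_measure mY mY1 measurable_lnu normr_lnu_le).
rewrite /J fineK ?fin_num_integral_ln_u //.
by apply: eq_integral => y /set_mem Yy; rewrite lnuE.
Qed.

Let birkhoff_lnu n y : R := \sum_(i < n) lnu (shiftn i y).

Let integrable_birkhoff_lnu n : m.-integrable Y (EFin \o birkhoff_lnu n).
Proof.
apply: (@integrable_bounded _ _ _ _ _ _ (n%:R * C) mY).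
  apply: measurable_funTS; apply: (@measurable_sum _ (Yspace l) R setT _ (index_enum 'I_n)
    (fun (i : 'I_n) y => lnu (shiftn i y))) => i.
  exact: measurableT_comp measurable_lnu (measurable_shiftn i).
move=> y _; apply: le_trans (ler_norm_sum _ _ _) _.
apply: (@le_trans _ _ (\sum_(i < n) C)); last by rewrite sumr_const card_ord mulr_natl.
by apply: ler_sum.
Qed.

Let integral_birkhoff_lnu n :
  (\int[m]_(y in Y) (birkhoff_lnu n y)%:E)%E = (n%:R * J)%:E.
Proof.
rewrite /birkhoff_lnu; under eq_integral do rewrite -sumEFin.
rewrite integral_sum //; last first.
  move=> i; apply: (@integrable_bounded _ _ _ _ _ _ C mY) => //.
  apply: measurable_funTS; exact: measurableT_comp measurable_lnu (measurable_shiftn i).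
under eq_bigr do rewrite integral_lnu_shiftn.
by rewrite sumEFin sumr_const card_ord mulr_natl.
Qed.

Let integrable_ln_gbar n : m.-integrable Y (EFin \o (fun y => ln (gbar p f n y))).
Proof.
apply: (@integrable_bounded _ _ _ _ _ _ _ mY _ (normr_ln_gbar_le w f_sv n)).
by apply: (@measurable_fun_agree _ n) => // y y' yy'; rewrite (gbar_agree _ _ yy').
Qed.

Lemma fin_num_integral_ln_gbar n :
  (\int[m]_(y in Y) (ln (gbar p f n y))%:E)%E \is a fin_num.
Proof. exact: integrable_fin_num (integrable_ln_gbar n). Qed.

Lemma integral_ln_gbar_deviation e : 0 < e -> exists c, forall n,
  `|fine (\int[m]_(y in Y) (ln (gbar p f n y))%:E)%E - n%:R * J| <= c + n%:R * e.
Proof.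
move=> e_gt0; have [N approx] := ln_gbar_birkhoff f_sv ufun_cvg e_gt0.
exists (var_sum f + N%:R * (2 * C)) => n.
rewrite -lee_fin -abse_EFin EFinB fineK ?fin_num_integral_ln_gbar //.
rewrite -integral_birkhoff_lnu; apply: abse_integralB_le => // y Yy.
rewrite /birkhoff_lnu (eq_bigr (fun i : 'I_n => ln (u (shiftn i y)))); first exact: approx.
by move=> i _; rewrite lnuE //; exact: Yset_shiftn.
Qed.

End Proposition.

Theorem proposition6p2 (R : realType) (k l : nat) (p : 'I_k.+1 -> 'I_l.+1)
  (f : seqsp k -> R) (w : seqsp k) (u : seqsp l -> R)
  (m : probability (Yspace l) R) :
  cont_shift f ->
  summable_variation f ->
  (forall e : R, 0 < e -> exists N : nat, forall n : nat, (N <= n)%N ->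
     forall y : seqsp l, Yset p y -> `|ufun p f w n y - u y| < e) ->
  m (Yset p : set (Yspace l)) = 1%E ->
  (forall A : set (Yspace l), measurable A ->
     m (shiftn 1 @^-1` A) = m A) ->
  (fun n : nat => ((n%:R)^-1)%:E *
      \int[m]_(y in (Yset p : set (Yspace l))) (ln (gbar p f n y))%:E)%E
    @ \oo --> (\int[m]_(y in (Yset p : set (Yspace l))) (ln (u y))%:E)%E.
Proof.
move=> _ f_sv ufun_cvg mY1 m_inv.
have gbar_fin n := fin_num_integral_ln_gbar p w m f_sv n.
rewrite -(fineK (fin_num_integral_ln_u m f_sv ufun_cvg)); apply: cvg_EFin.
  by apply: nearW => n; rewrite -(fineK (gbar_fin n)) -EFinM.
rewrite (_ : fine \o _ = fun n : nat => n%:R^-1 *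
    fine (\int[m]_(y in Yset p) (ln (gbar p f n y))%:E)%E); last first.
  by apply/funext => n /=; rewrite -(fineK (gbar_fin n)) -EFinM.
apply: cvg_scaled_of_sublinear_deviation.
exact: integral_ln_gbar_deviation f_sv ufun_cvg mY1 m_inv.
Qed.
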